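(* Let $N\ge 2$ and let $f:\mathbb{C}\to\mathbb{C}^N$ be a holomorphic map whose components are polynomials in $\zeta$ and are linearly independent over $\mathbb{C}$. Define $P_+^0 f=f$, $P_+^{k+1}f=P_+(P_+^k f)$, where $P_+ g=\partial g-g\,\frac{g^\dagger\cdot\partial g}{g^\dagger\cdot g}$ and $\partial=\partial/\partial\zeta$, $\bar\partial=\partial/\partial\bar\zeta$. For $k=0,\dots,N-1$ let $P_k=\frac{P_+^k f\otimes (P_+^k f)^\dagger}{|P_+^k f|^2}$ (defined wherever $P_+^kf\neq 0$). Let $\alpha_0,\dots,\alpha_{N-2}$ be real constants and $\mathbb{P}=\sum_{k=0}^{N-2}\alpha_k P_k$. Then, wherever all these projectors are defined, $$g_{++}:=\operatorname{tr}(\partial\mathbb{P}\,\partial\mathbb{P})=0,\qquad g_{--}:=\operatorname{tr}(\bar\partial\mathbb{P}\,\bar\partial\mathbb{P})=0,$$ i.e. the metric on the surface described by $\mathbb{P}$ (with components $g_{++}$, $g_{+-}=\operatorname{tr}(\partial\mathbb{P}\,\bar\partial\mathbb{P})$, $g_{--}$) has only the mixed component $g_{+-}$ possibly nonzero.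
   Context: Here $\zeta=\zeta_1+i\zeta_2$ is the complex coordinate on the plane obtained from $S^2$ by stereographic projection, $\dagger$ denotes Hermitian conjugation, $g^\dagger\cdot h=\sum_i \bar g^i h^i$, and $|g|^2=g^\dagger\cdot g$. The vectors $P_+^k f$ describe harmonic maps $S^2\to CP^{N-1}$; $\mathbb{P}$ is a Hermitian $N\times N$ matrix-valued function of $(\zeta,\bar\zeta)$, whose real and imaginary parts of entries define a surface in $\mathbb{R}^{N^2-1}$ with induced metric components $g_{++}=\operatorname{tr}(\partial\mathbb{P}\partial\mathbb{P})$, $g_{+-}=\operatorname{tr}(\partial\mathbb{P}\bar\partial\mathbb{P})$, $g_{--}=\overline{g_{++}}$. *)

From Stdlib Require Import Reals.
From Coquelicot Require Import Coquelicot.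
Open Scope C_scope.

Fixpoint csum (n : nat) (F : nat -> C) : C :=
  match n with O => 0 | S m => csum m F + F m end.

Fixpoint cpow (z : C) (m : nat) : C :=
  match m with O => 1 | S k => z * cpow z k end.

Definition dx (h : C -> C) (z : C) : C :=
  (Derive (fun t => fst (h (t, snd z))) (fst z),
   Derive (fun t => snd (h (t, snd z))) (fst z)).
Definition dy (h : C -> C) (z : C) : C :=
  (Derive (fun t => fst (h (fst z, t))) (snd z),
   Derive (fun t => snd (h (fst z, t))) (snd z)).

Definition wd (h : C -> C) (z : C) : C := (dx h z - Ci * dy h z) / 2.
Definition wdbar (h : C -> C) (z : C) : C := (dx h z + Ci * dy h z) / 2.

Definition vfun := C -> nat -> C.

Definition herm (N : nat) (g h : nat -> C) : C :=
  csum N (fun i => Cconj (g i) * h i).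

Definition vwd (g : vfun) : vfun := fun z j => wd (fun w => g w j) z.

Definition Pplus (N : nat) (g : vfun) : vfun :=
  fun z j => vwd g z j - g z j * (herm N (g z) (vwd g z) / herm N (g z) (g z)).

Fixpoint Pplus_iter (N : nat) (k : nat) (f : vfun) : vfun :=
  match k with O => f | S k' => Pplus N (Pplus_iter N k' f) end.

Definition proj (N : nat) (k : nat) (f : vfun) : C -> nat -> nat -> C :=
  fun z i j => let g := Pplus_iter N k f z in
    g i * Cconj (g j) / herm N g g.

Definition bigP (N : nat) (alpha : nat -> R) (f : vfun) : C -> nat -> nat -> C :=
  fun z i j => csum (N - 1) (fun k => RtoC (alpha k) * proj N k f z i j).

Definition mwd (M : C -> nat -> nat -> C) : C -> nat -> nat -> C :=
  fun z i j => wd (fun w => M w i j) z.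
Definition mwdbar (M : C -> nat -> nat -> C) : C -> nat -> nat -> C :=
  fun z i j => wdbar (fun w => M w i j) z.

Definition trmul (N : nat) (A B : nat -> nat -> C) : C :=
  csum N (fun i => csum N (fun j => A i j * B j i)).

Definition polynomial_components (N : nat) (f : vfun) : Prop :=
  exists (D : nat) (c : nat -> nat -> C),
    forall (j : nat) (z : C), (j < N)%nat ->
      f z j = csum (S D) (fun m => c j m * cpow z m).

Definition lin_indep_components (N : nat) (f : vfun) : Prop :=
  forall a : nat -> C,
    (forall z : C, csum N (fun j => a j * f z j) = 0) ->
    forall j, (j < N)%nat -> a j = 0.

From Pilot Require Import Defs.
From Stdlib Require Import Reals Lra Lia.
From Coquelicot Require Import Coquelicot.
Open Scope C_scope.

(* Write [g_k] for [P_+^k f] and [n_k = |g_k|^2]. Since [f] is holomorphic,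
   [dzetabar g_0 = 0] and [dzetabar g_(k+1) = - (n_(k+1) / n_k) g_k], and the [g_k] are
   pairwise orthogonal; both facts are proved together by induction on [k]. Consequently
   [dzeta P_k = A_(k+1) - A_k], where [A_k = g_k g_(k-1)^dagger / n_(k-1)] ([ladder k]) and
   [A_0 = 0]. Each [tr (A_a A_b) = <g_(b-1), g_a> <g_(a-1), g_b> / (n_(a-1) n_(b-1))] has a
   vanishing factor, so [tr (dzeta bold-P)^2 = 0]; as bold-P is Hermitian, [dzetabar bold-P]
   is the adjoint of [dzeta bold-P], which gives the second identity.
   The rational functions of [zeta] and [conj zeta] that occur are reified as syntax trees
   with symbolic Wirtinger derivatives; these agree with the analytic ones wherever all
   denominators are nonzero, an open condition. *)

Lemma Cconj_0 : Cconj 0 = 0.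
Proof. apply injective_projections; simpl; ring. Qed.

Lemma Cconj_1 : Cconj 1 = 1.
Proof. apply injective_projections; simpl; ring. Qed.

Lemma Cconj_RtoC (r : R) : Cconj (RtoC r) = RtoC r.
Proof. apply injective_projections; simpl; ring. Qed.

(* Unlike the library's [Cinv_conj], this needs no [a <> 0]: Coquelicot's [/ 0] is [0]. *)
Lemma Cconj_inv (a : C) : Cconj (/ a) = / Cconj a.
Proof.
  destruct a as [r i]; unfold Cconj, Cinv; simpl.
  replace (- i * (- i * 1))%R with (i * (i * 1))%R by ring.
  f_equal; unfold Rdiv; ring.
Qed.

Lemma Cconj_neq0 (a : C) : a <> 0 -> Cconj a <> 0.
Proof. intros Ha E; apply Ha; rewrite <- (Cconj_conj a), E; apply Cconj_0. Qed.

Lemma Cnorm2_neq0 (a : C) : a <> 0 -> (fst a ^ 2 + snd a ^ 2)%R <> 0%R.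
Proof.
  destruct a as [r i]; simpl; intros Ha E; apply Ha.
  assert (r = 0%R) by nra; assert (i = 0%R) by nra; subst; reflexivity.
Qed.

Definition is_derive_C (h : R -> C) (x : R) (d : C) : Prop :=
  is_derive (fun t => fst (h t)) x (fst d) /\ is_derive (fun t => snd (h t)) x (snd d).

Lemma is_derive_C_eq h x d d' : is_derive_C h x d -> d = d' -> is_derive_C h x d'.
Proof. now intros H <-. Qed.

Lemma is_derive_C_const (c : C) x : is_derive_C (fun _ => c) x 0.
Proof. split; exact (is_derive_const _ x). Qed.

Lemma is_derive_C_plus h1 h2 x d1 d2 :
  is_derive_C h1 x d1 -> is_derive_C h2 x d2 ->
  is_derive_C (fun t => h1 t + h2 t) x (d1 + d2).
Proof.
  intros [Hr1 Hi1] [Hr2 Hi2];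
    split; [exact (is_derive_plus _ _ x _ _ Hr1 Hr2) | exact (is_derive_plus _ _ x _ _ Hi1 Hi2)].
Qed.

Lemma is_derive_C_opp h x d : is_derive_C h x d -> is_derive_C (fun t => - h t) x (- d).
Proof.
  intros [Hr Hi]; split; [exact (is_derive_opp _ x _ Hr) | exact (is_derive_opp _ x _ Hi)].
Qed.

Ltac exact_derive D :=
  match type of D with is_derive _ _ ?v =>
    match goal with |- is_derive _ _ ?w => replace w with v; [exact D |] end end.

Lemma is_derive_C_mult h1 h2 x d1 d2 :
  is_derive_C h1 x d1 -> is_derive_C h2 x d2 ->
  is_derive_C (fun t => h1 t * h2 t) x (d1 * h2 x + h1 x * d2).
Proof.
  intros [Hr1 Hi1] [Hr2 Hi2].
  pose proof (is_derive_mult _ _ x _ _ Hr1 Hr2 Rmult_comm) as Drr.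
  pose proof (is_derive_mult _ _ x _ _ Hi1 Hi2 Rmult_comm) as Dii.
  pose proof (is_derive_mult _ _ x _ _ Hr1 Hi2 Rmult_comm) as Dri.
  pose proof (is_derive_mult _ _ x _ _ Hi1 Hr2 Rmult_comm) as Dir.
  split; simpl.
  - exact_derive (is_derive_minus _ _ x _ _ Drr Dii); cbn; ring.
  - exact_derive (is_derive_plus _ _ x _ _ Dri Dir); cbn; ring.
Qed.

Lemma is_derive_C_conj h x d : is_derive_C h x d -> is_derive_C (fun t => Cconj (h t)) x (Cconj d).
Proof. intros [Hr Hi]; split; [exact Hr | exact (is_derive_opp _ x _ Hi)]. Qed.

Lemma is_derive_C_inv h x d : is_derive_C h x d -> h x <> 0 ->
  is_derive_C (fun t => / h t) x (- (d * (/ h x * / h x))).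
Proof.
  intros [Hr Hi] Hn. pose proof (Cnorm2_neq0 _ Hn) as Hq.
  assert (Dq : is_derive (fun t => (fst (h t) ^ 2 + snd (h t) ^ 2)%R) x
                 (2 * fst (h x) * fst d + 2 * snd (h x) * snd d)%R).
  { apply (is_derive_ext (fun t => fst (h t) * fst (h t) + snd (h t) * snd (h t))%R);
      [intro t; cbn; ring |].
    exact_derive (is_derive_plus _ _ x _ _ (is_derive_mult _ _ x _ _ Hr Hr Rmult_comm)
                                         (is_derive_mult _ _ x _ _ Hi Hi Rmult_comm)).
    cbn; ring. }
  split; simpl.
  - exact_derive (is_derive_div _ _ x _ _ Hr Dq Hq).
    simpl in Hq |- *; rewrite !Rmult_1_r in *; cbn; field; exact Hq.
  - exact_derive (is_derive_div _ _ x _ _ (is_derive_opp _ x _ Hi) Dq Hq).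
    simpl in Hq |- *; rewrite !Rmult_1_r in *; cbn; field; exact Hq.
Qed.

Lemma locally_neq0 (f : R -> R) x l : is_derive f x l -> f x <> 0%R ->
  locally x (fun t => f t <> 0%R).
Proof.
  intros Hd Hn.
  apply (ex_derive_continuous f x (ex_intro _ l Hd) (fun y : R => y <> 0%R)).
  exact (locally_open _ _ (open_neq 0) (fun _ H => H) _ Hn).
Qed.

Lemma locally_neq0_C h x d : is_derive_C h x d -> h x <> 0 -> locally x (fun t => h t <> 0).
Proof.
  intros [Hr Hi] Hn.
  destruct (Req_dec (fst (h x)) 0) as [Er | Er].
  - assert (Ei : snd (h x) <> 0%R) by (intro Ei; apply Hn, injective_projections; auto).
    eapply filter_imp; [| exact (locally_neq0 _ _ _ Hi Ei)]; intros t Ht E; apply Ht; now rewrite E.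
  - eapply filter_imp; [| exact (locally_neq0 _ _ _ Hr Er)]; intros t Ht E; apply Ht; now rewrite E.
Qed.

(* Rational expressions in [zeta] and [conj zeta]; [dzeta] and [dzetabar] are the
   symbolic Wirtinger derivatives, treating [EVar] and [EConjVar] as independent. *)
Inductive cexpr : Type :=
| EConst : C -> cexpr
| EVar : cexpr
| EConjVar : cexpr
| EPlus : cexpr -> cexpr -> cexpr
| EMult : cexpr -> cexpr -> cexpr
| EOpp : cexpr -> cexpr
| EInv : cexpr -> cexpr.

Fixpoint eval (e : cexpr) (u : C) : C :=
  match e with
  | EConst c => c
  | EVar => u
  | EConjVar => Cconj u
  | EPlus a b => eval a u + eval b u
  | EMult a b => eval a u * eval b u
  | EOpp a => - eval a u
  | EInv a => / eval a u
  end.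

Fixpoint defined (e : cexpr) (u : C) : Prop :=
  match e with
  | EPlus a b | EMult a b => defined a u /\ defined b u
  | EOpp a => defined a u
  | EInv a => defined a u /\ eval a u <> 0
  | _ => True
  end.

Fixpoint dzeta (e : cexpr) : cexpr :=
  match e with
  | EConst _ | EConjVar => EConst 0
  | EVar => EConst 1
  | EPlus a b => EPlus (dzeta a) (dzeta b)
  | EMult a b => EPlus (EMult (dzeta a) b) (EMult a (dzeta b))
  | EOpp a => EOpp (dzeta a)
  | EInv a => EOpp (EMult (dzeta a) (EMult (EInv a) (EInv a)))
  end.

Fixpoint dzetabar (e : cexpr) : cexpr :=
  match e with
  | EConst _ | EVar => EConst 0
  | EConjVar => EConst 1
  | EPlus a b => EPlus (dzetabar a) (dzetabar b)
  | EMult a b => EPlus (EMult (dzetabar a) b) (EMult a (dzetabar b))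
  | EOpp a => EOpp (dzetabar a)
  | EInv a => EOpp (EMult (dzetabar a) (EMult (EInv a) (EInv a)))
  end.

Fixpoint econj (e : cexpr) : cexpr :=
  match e with
  | EConst c => EConst (Cconj c)
  | EVar => EConjVar
  | EConjVar => EVar
  | EPlus a b => EPlus (econj a) (econj b)
  | EMult a b => EMult (econj a) (econj b)
  | EOpp a => EOpp (econj a)
  | EInv a => EInv (econj a)
  end.

Ltac push_conj :=
  repeat first [ rewrite Cplus_conj | rewrite Cmult_conj | rewrite Copp_conj
               | rewrite Cconj_inv | rewrite Cconj_conj | rewrite Cconj_0 | rewrite Cconj_1 ].

Lemma eval_econj e u : eval (econj e) u = Cconj (eval e u).
Proof. induction e; simpl; rewrite ?IHe, ?IHe1, ?IHe2; push_conj; reflexivity. Qed.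

Lemma defined_econj e u : defined (econj e) u <-> defined e u.
Proof.
  induction e; simpl; try tauto.
  rewrite IHe, eval_econj; split; intros [Hd Hn]; split; auto.
  - intro E; apply Hn; rewrite E; apply Cconj_0.
  - now apply Cconj_neq0.
Qed.

Lemma dzeta_econj e u : eval (dzeta (econj e)) u = Cconj (eval (dzetabar e) u).
Proof. induction e; simpl; rewrite ?IHe, ?IHe1, ?IHe2, ?eval_econj; push_conj; reflexivity. Qed.

Lemma dzetabar_econj e u : eval (dzetabar (econj e)) u = Cconj (eval (dzeta e) u).
Proof. induction e; simpl; rewrite ?IHe, ?IHe1, ?IHe2, ?eval_econj; push_conj; reflexivity. Qed.

Lemma defined_dzeta e u : defined e u -> defined (dzeta e) u.
Proof. induction e; simpl; tauto. Qed.

Lemma defined_dzetabar e u : defined e u -> defined (dzetabar e) u.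
Proof. induction e; simpl; tauto. Qed.

Lemma dzeta_dzetabar e u : defined e u ->
  eval (dzeta (dzetabar e)) u = eval (dzetabar (dzeta e)) u.
Proof.
  induction e; simpl; intros Hd; try reflexivity.
  - now rewrite IHe1, IHe2 by tauto.
  - rewrite IHe1, IHe2 by tauto; ring.
  - now rewrite IHe.
  - rewrite IHe by tauto; field; tauto.
Qed.

Lemma is_derive_C_eval e (p : R -> C) x dp : is_derive_C p x dp -> defined e (p x) ->
  is_derive_C (fun t => eval e (p t)) x
    (eval (dzeta e) (p x) * dp + eval (dzetabar e) (p x) * Cconj dp).
Proof.
  intros Hp; induction e; simpl; intros Hd.
  - eapply is_derive_C_eq; [apply is_derive_C_const | ring].
  - eapply is_derive_C_eq; [exact Hp | ring].
  - eapply is_derive_C_eq; [exact (is_derive_C_conj _ _ _ Hp) | ring].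
  - eapply is_derive_C_eq; [apply is_derive_C_plus; [apply IHe1 | apply IHe2]; tauto | ring].
  - eapply is_derive_C_eq;
      [apply is_derive_C_mult; [apply IHe1 | apply IHe2]; tauto | cbv beta; ring].
  - eapply is_derive_C_eq; [apply is_derive_C_opp, IHe, Hd | ring].
  - eapply is_derive_C_eq; [apply is_derive_C_inv; [apply IHe |]; tauto | cbv beta; field; tauto].
Qed.

Lemma defined_locally e (p : R -> C) x dp : is_derive_C p x dp -> defined e (p x) ->
  locally x (fun t => defined e (p t)).
Proof.
  intros Hp; induction e; simpl; intros Hd; try exact (filter_forall _ (fun _ => I)).
  1-2: apply filter_and; tauto.
  - tauto.
  - apply filter_and; [tauto |].
    exact (locally_neq0_C _ _ _ (is_derive_C_eval e p x dp Hp (proj1 Hd)) (proj2 Hd)).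
Qed.

(* [dx] and [dy] only see [h] on the two coordinate lines through [u]. *)
Definition near_lines (P : C -> Prop) (u : C) : Prop :=
  locally (fst u) (fun t => P (t, snd u)) /\ locally (snd u) (fun t => P (fst u, t)).

Lemma near_lines_impl (P Q : C -> Prop) u :
  (forall w, P w -> Q w) -> near_lines P u -> near_lines Q u.
Proof. intros H [A B]; split; eapply filter_imp; eauto; intros; apply H; auto. Qed.

Lemma is_derive_C_horizontal x y : is_derive_C (fun t => (t, y)) x 1.
Proof. split; [apply (is_derive_id x) | apply (is_derive_const y x)]. Qed.

Lemma is_derive_C_vertical x y : is_derive_C (fun t => (x, t)) y Ci.
Proof. split; [apply (is_derive_const x y) | apply (is_derive_id y)]. Qed.

Lemma near_lines_defined e u : defined e u -> near_lines (defined e) u.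
Proof.
  destruct u as [x y]; intros H; split.
  - exact (defined_locally e _ x 1 (is_derive_C_horizontal x y) H).
  - exact (defined_locally e _ y Ci (is_derive_C_vertical x y) H).
Qed.

Lemma dx_dy_ext_near (F G : C -> C) u : near_lines (fun w => F w = G w) u ->
  dx F u = dx G u /\ dy F u = dy G u.
Proof.
  intros [Nx Ny]; unfold dx, dy; split; f_equal; apply Derive_ext_loc.
  1-2: apply (filter_imp _ _ (fun t (E : F (t, snd u) = G (t, snd u)) => f_equal _ E) Nx).
  all: apply (filter_imp _ _ (fun t (E : F (fst u, t) = G (fst u, t)) => f_equal _ E) Ny).
Qed.

Lemma dx_dy_eval e u : defined e u ->
  dx (eval e) u = eval (dzeta e) u + eval (dzetabar e) u /\
  dy (eval e) u = Ci * (eval (dzeta e) u - eval (dzetabar e) u).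
Proof.
  destruct u as [x y]; intros Hd.
  assert (Dx := is_derive_C_eval e _ x 1 (is_derive_C_horizontal x y) Hd).
  assert (Dy := is_derive_C_eval e _ y Ci (is_derive_C_vertical x y) Hd).
  cbv beta in Dx, Dy; unfold dx, dy; simpl fst; simpl snd; split.
  - apply (is_derive_C_eq _ _ _ (eval (dzeta e) (x, y) + eval (dzetabar e) (x, y))) in Dx;
      [| rewrite Cconj_1; ring].
    destruct Dx as [Dx1 Dx2]; rewrite (surjective_pairing (_ + _)).
    f_equal; apply is_derive_unique; assumption.
  - apply (is_derive_C_eq _ _ _ (Ci * (eval (dzeta e) (x, y) - eval (dzetabar e) (x, y)))) in Dy;
      [| apply injective_projections; simpl; ring].
    destruct Dy as [Dy1 Dy2]; rewrite (surjective_pairing (Ci * _)).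
    f_equal; apply is_derive_unique; assumption.
Qed.

Lemma dx_dy_eval_near F e u :
  near_lines (fun w => F w = eval e w) u -> defined e u ->
  dx F u = eval (dzeta e) u + eval (dzetabar e) u /\
  dy F u = Ci * (eval (dzeta e) u - eval (dzetabar e) u).
Proof.
  intros Hn Hd; destruct (dx_dy_ext_near F (eval e) u Hn) as [-> ->]; now apply dx_dy_eval.
Qed.

Lemma wd_eval_near F e u :
  near_lines (fun w => F w = eval e w) u -> defined e u -> wd F u = eval (dzeta e) u.
Proof.
  intros Hn Hd; unfold wd; destruct (dx_dy_eval_near F e u Hn Hd) as [-> ->].
  generalize (eval (dzeta e) u) (eval (dzetabar e) u); intros [a b] [c d].
  apply injective_projections; simpl; field.
Qed.

Lemma wdbar_eval_near F e u :
  near_lines (fun w => F w = eval e w) u -> defined e u -> wdbar F u = eval (dzetabar e) u.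
Proof.
  intros Hn Hd; unfold wdbar; destruct (dx_dy_eval_near F e u Hn Hd) as [-> ->].
  generalize (eval (dzeta e) u) (eval (dzetabar e) u); intros [a b] [c d].
  apply injective_projections; simpl; field.
Qed.

Lemma dzeta_ext_defined d a b u :
  (forall w, defined d w -> eval a w = eval b w) -> defined d u ->
  defined a u -> defined b u -> eval (dzeta a) u = eval (dzeta b) u.
Proof.
  intros Hab Hu Ha Hb.
  rewrite <- (wd_eval_near (eval a) b u), (wd_eval_near (eval a) a u); auto.
  - split; apply filter_forall; reflexivity.
  - exact (near_lines_impl _ _ u Hab (near_lines_defined d u Hu)).
Qed.

Lemma csum_ext n F G : (forall i, (i < n)%nat -> F i = G i) -> csum n F = csum n G.
Proof. induction n; simpl; intros H; auto. rewrite IHn, H; auto. Qed.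

Lemma csum_zero n : csum n (fun _ => 0) = 0.
Proof. induction n; simpl; [| rewrite IHn]; ring. Qed.

Lemma csum_eq0 n (F : nat -> C) : (forall i, (i < n)%nat -> F i = 0) -> csum n F = 0.
Proof. intros H; rewrite (csum_ext n F (fun _ => 0) H); apply csum_zero. Qed.

Lemma csum_plus n F G : csum n (fun i => F i + G i) = csum n F + csum n G.
Proof. induction n; simpl; [| rewrite IHn]; ring. Qed.

Lemma csum_scal n c F : csum n (fun i => c * F i) = c * csum n F.
Proof. induction n; simpl; [| rewrite IHn]; ring. Qed.

Lemma csum_conj n F : Cconj (csum n F) = csum n (fun i => Cconj (F i)).
Proof. induction n; simpl; [apply Cconj_0 | now rewrite Cplus_conj, IHn]. Qed.

Lemma csum_swap n m F :
  csum n (fun i => csum m (fun j => F i j)) = csum m (fun j => csum n (fun i => F i j)).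
Proof. induction n; simpl; [symmetry; apply csum_zero | now rewrite IHn, <- csum_plus]. Qed.

Lemma csum_mult n m F G : csum n F * csum m G = csum n (fun k => csum m (fun l => F k * G l)).
Proof. induction n; simpl; [ring | rewrite <- IHn, csum_scal; ring]. Qed.

Lemma herm_ext N a a' b b' : (forall i, (i < N)%nat -> a i = a' i) ->
  (forall i, (i < N)%nat -> b i = b' i) -> herm N a b = herm N a' b'.
Proof. intros Ha Hb; apply csum_ext; intros i Hi; now rewrite Ha, Hb. Qed.

Lemma herm_conj N a b : Cconj (herm N a b) = herm N b a.
Proof.
  unfold herm; rewrite csum_conj; apply csum_ext; intros.
  rewrite Cmult_conj, Cconj_conj; ring.
Qed.

Lemma herm_plusl N a b c : herm N (fun i => a i + b i) c = herm N a c + herm N b c.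
Proof. unfold herm; rewrite <- csum_plus; apply csum_ext; intros; rewrite Cplus_conj; ring. Qed.

Lemma herm_plusr N a b c : herm N c (fun i => a i + b i) = herm N c a + herm N c b.
Proof. unfold herm; rewrite <- csum_plus; apply csum_ext; intros; ring. Qed.

Lemma herm_scall N s a c : herm N (fun i => s * a i) c = Cconj s * herm N a c.
Proof. unfold herm; rewrite <- csum_scal; apply csum_ext; intros; rewrite Cmult_conj; ring. Qed.

Lemma herm_scalr N s a c : herm N c (fun i => s * a i) = s * herm N c a.
Proof. unfold herm; rewrite <- csum_scal; apply csum_ext; intros; ring. Qed.

Lemma herm_zerol N c : herm N (fun _ => 0) c = 0.
Proof. apply csum_eq0; intros; rewrite Cconj_0; ring. Qed.

Lemma herm_zeror N c : herm N c (fun _ => 0) = 0.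
Proof. apply csum_eq0; intros; ring. Qed.

Lemma trmul_ext N A A' B B' :
  (forall i j, (i < N)%nat -> (j < N)%nat -> A i j = A' i j) ->
  (forall i j, (i < N)%nat -> (j < N)%nat -> B i j = B' i j) -> trmul N A B = trmul N A' B'.
Proof.
  intros HA HB; apply csum_ext; intros i Hi; apply csum_ext; intros j Hj.
  now rewrite HA, HB.
Qed.

Lemma trmul_zerol N X : trmul N (fun _ _ => 0) X = 0.
Proof. apply csum_eq0; intros; apply csum_eq0; intros; ring. Qed.

Lemma trmul_zeror N X : trmul N X (fun _ _ => 0) = 0.
Proof. apply csum_eq0; intros; apply csum_eq0; intros; ring. Qed.

Lemma trmul_conj_transpose N A :
  trmul N (fun i j => Cconj (A j i)) (fun i j => Cconj (A j i)) = Cconj (trmul N A A).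
Proof.
  unfold trmul; rewrite csum_conj, csum_swap; apply csum_ext; intros.
  rewrite csum_conj; apply csum_ext; intros; rewrite Cmult_conj; ring.
Qed.

Lemma trmul_csum N n F G :
  trmul N (fun i j => csum n (fun k => F k i j)) (fun i j => csum n (fun l => G l i j)) =
  csum n (fun k => csum n (fun l => trmul N (F k) (G l))).
Proof.
  unfold trmul.
  transitivity (csum N (fun i => csum N (fun j =>
                  csum n (fun k => csum n (fun l => F k i j * G l j i))))).
  { apply csum_ext; intros; apply csum_ext; intros; apply csum_mult. }
  rewrite (csum_ext N _ (fun i => csum n (fun k => csum N (fun j =>
             csum n (fun l => F k i j * G l j i))))) by (intros; apply csum_swap).
  rewrite csum_swap; apply csum_ext; intros k _.
  rewrite (csum_ext N _ (fun i => csum n (fun l => csum N (fun j => F k i j * G l j i))))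
    by (intros; apply csum_swap).
  apply csum_swap.
Qed.

Lemma trmul_plus_scal N a b X Y Z :
  trmul N (fun i j => a * X i j + b * Y i j) Z = a * trmul N X Z + b * trmul N Y Z.
Proof.
  unfold trmul; rewrite <- !csum_scal, <- csum_plus; apply csum_ext; intros.
  rewrite <- !csum_scal, <- csum_plus; apply csum_ext; intros; ring.
Qed.

Lemma trmul_comm N X Y : trmul N X Y = trmul N Y X.
Proof. unfold trmul; rewrite csum_swap; apply csum_ext; intros; apply csum_ext; intros; ring. Qed.

Lemma trmul_telescope_zero N n (c : nat -> C) (X : nat -> nat -> nat -> C) :
  (forall a b, (a <= n)%nat -> (b <= n)%nat -> trmul N (X a) (X b) = 0) ->
  let T i j := csum n (fun k => c k * (X (S k) i j - X k i j)) in trmul N T T = 0.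
Proof.
  intros HX T; unfold T; rewrite trmul_csum.
  apply csum_eq0; intros k Hk; apply csum_eq0; intros l Hl.
  assert (Split : forall m i j, c m * (X (S m) i j - X m i j) = c m * X (S m) i j + - c m * X m i j)
    by (intros; ring).
  rewrite (trmul_ext N _ (fun i j => c k * X (S k) i j + - c k * X k i j)
                     _ (fun i j => c l * X (S l) i j + - c l * X l i j)) by (intros; apply Split).
  rewrite trmul_plus_scal, (trmul_comm N (X (S k))), (trmul_comm N (X k)), !trmul_plus_scal.
  rewrite !HX by lia; ring.
Qed.

Fixpoint esum (n : nat) (F : nat -> cexpr) : cexpr :=
  match n with O => EConst 0 | S m => EPlus (esum m F) (F m) end.

Definition eherm (N : nat) (a b : nat -> cexpr) : cexpr :=
  esum N (fun i => EMult (econj (a i)) (b i)).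

Lemma eval_esum n F u : eval (esum n F) u = csum n (fun i => eval (F i) u).
Proof. induction n; simpl; [| rewrite IHn]; reflexivity. Qed.

Lemma dzeta_esum n F u : eval (dzeta (esum n F)) u = csum n (fun i => eval (dzeta (F i)) u).
Proof. induction n; simpl; [| rewrite IHn]; reflexivity. Qed.

Lemma dzetabar_esum n F u :
  eval (dzetabar (esum n F)) u = csum n (fun i => eval (dzetabar (F i)) u).
Proof. induction n; simpl; [| rewrite IHn]; reflexivity. Qed.

Lemma defined_esum n F u : defined (esum n F) u <-> forall i, (i < n)%nat -> defined (F i) u.
Proof.
  induction n; simpl; [split; [lia | auto] |].
  rewrite IHn; split.
  - intros [H1 H2] i Hi; destruct (Nat.eq_dec i n) as [-> | Hne]; auto; apply H1; lia.
  - intros H; split; auto.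
Qed.

Lemma eval_eherm N a b u :
  eval (eherm N a b) u = herm N (fun i => eval (a i) u) (fun i => eval (b i) u).
Proof. unfold eherm; rewrite eval_esum; apply csum_ext; intros; simpl; now rewrite eval_econj. Qed.

Lemma dzeta_eherm N a b u : eval (dzeta (eherm N a b)) u =
  herm N (fun i => eval (dzetabar (a i)) u) (fun i => eval (b i) u) +
  herm N (fun i => eval (a i) u) (fun i => eval (dzeta (b i)) u).
Proof.
  unfold eherm, herm; rewrite dzeta_esum, <- csum_plus; apply csum_ext; intros; simpl.
  now rewrite eval_econj, dzeta_econj.
Qed.

Lemma dzetabar_eherm N a b u : eval (dzetabar (eherm N a b)) u =
  herm N (fun i => eval (dzeta (a i)) u) (fun i => eval (b i) u) +
  herm N (fun i => eval (a i) u) (fun i => eval (dzetabar (b i)) u).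
Proof.
  unfold eherm, herm; rewrite dzetabar_esum, <- csum_plus; apply csum_ext; intros; simpl.
  now rewrite eval_econj, dzetabar_econj.
Qed.

Lemma defined_eherm N a b u :
  defined (eherm N a b) u <-> forall i, (i < N)%nat -> defined (a i) u /\ defined (b i) u.
Proof.
  unfold eherm; rewrite defined_esum; simpl.
  split; intros H i Hi; specialize (H i Hi); now rewrite defined_econj in *.
Qed.

Section Iterates.

Variable N : nat.
Hypothesis N_pos : (0 < N)%nat.
Variable f0 : nat -> cexpr.
Hypothesis f0_holomorphic : forall j u, eval (dzetabar (f0 j)) u = 0.

Fixpoint Pexpr (k : nat) : nat -> cexpr :=
  match k with
  | O => f0
  | S k' => fun j => EPlus (dzeta (Pexpr k' j))
      (EOpp (EMult (Pexpr k' j)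
        (EMult (eherm N (Pexpr k') (fun i => dzeta (Pexpr k' i)))
               (EInv (eherm N (Pexpr k') (Pexpr k'))))))
  end.

Local Notation enorm2 k := (eherm N (Pexpr k) (Pexpr k)).

Lemma defined_enorm2_S k u :
  defined (enorm2 (S k)) u -> defined (enorm2 k) u /\ eval (enorm2 k) u <> 0.
Proof. intros Hd; apply defined_eherm with (i := 0%nat) in Hd; simpl in Hd; tauto. Qed.

Lemma defined_enorm2_le K k u : defined (enorm2 K) u -> (k <= K)%nat -> defined (enorm2 k) u.
Proof. intros Hd Hle; induction Hle; auto; apply IHHle, defined_enorm2_S, Hd. Qed.

Lemma enorm2_neq0 K k u : defined (enorm2 K) u -> (k < K)%nat -> eval (enorm2 k) u <> 0.
Proof. intros Hd Hlt; apply defined_enorm2_S, (defined_enorm2_le K); auto. Qed.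

Lemma defined_Pexpr k u j : defined (enorm2 k) u -> (j < N)%nat -> defined (Pexpr k j) u.
Proof. intros Hd Hj; exact (proj1 (proj1 (defined_eherm _ _ _ _) Hd j Hj)). Qed.

Lemma defined_enorm2_succ k u :
  defined (enorm2 k) u -> eval (enorm2 k) u <> 0 -> defined (enorm2 (S k)) u.
Proof.
  intros Hd Hn.
  assert (HS : forall i, (i < N)%nat -> defined (Pexpr (S k) i) u).
  { intros i Hi; simpl; repeat split; auto using defined_dzeta, defined_Pexpr.
    apply defined_eherm; auto using defined_dzeta, defined_Pexpr. }
  apply defined_eherm; auto.
Qed.

Variable K : nat.
(* [dom u] says that [n_0, ..., n_(K-1)] do not vanish at [u]. *)
Local Notation dom u := (defined (enorm2 K) u).

Definition g k u j := eval (Pexpr k j) u.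
Definition dg k u j := eval (dzeta (Pexpr k j)) u.
Definition dbarg k u j := eval (dzetabar (Pexpr k j)) u.
Definition dbardg k u j := eval (dzetabar (dzeta (Pexpr k j))) u.
Definition nrm2 k u := herm N (g k u) (g k u).
Definition mixd k u := herm N (g k u) (dg k u).

Lemma eval_enorm2 k u : eval (enorm2 k) u = nrm2 k u.
Proof. apply eval_eherm. Qed.

Lemma nrm2_neq0 k u : dom u -> (k < K)%nat -> nrm2 k u <> 0.
Proof. rewrite <- eval_enorm2; apply enorm2_neq0. Qed.

Lemma nrm2_conj k u : Cconj (nrm2 k u) = nrm2 k u.
Proof. apply herm_conj. Qed.

Lemma g_S k u j : g (S k) u j = dg k u j + - (mixd k u / nrm2 k u) * g k u j.
Proof.
  unfold g at 1; cbn [Pexpr eval]; rewrite !eval_eherm; fold (g k u) (dg k u).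
  unfold mixd, nrm2, g, dg, Cdiv; ring.
Qed.

Lemma dg_eq k u j : dg k u j = g (S k) u j + mixd k u / nrm2 k u * g k u j.
Proof. rewrite g_S; ring. Qed.

Definition dbar_expr (k j : nat) : cexpr :=
  match k with
  | O => EConst 0
  | S k' => EMult (EOpp (EMult (enorm2 (S k')) (EInv (enorm2 k')))) (Pexpr k' j)
  end.

Lemma eval_dbar_expr_S k u j : eval (dbar_expr (S k) j) u = - (nrm2 (S k) u / nrm2 k u) * g k u j.
Proof. cbn [dbar_expr eval]; rewrite !eval_enorm2; reflexivity. Qed.

Lemma defined_dbar_expr k u j : dom u -> (k <= K)%nat -> (j < N)%nat -> defined (dbar_expr k j) u.
Proof.
  intros Hu Hk Hj; destruct k as [| k']; cbn [dbar_expr defined]; auto.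
  assert (Hk' : defined (enorm2 k') u) by (apply (defined_enorm2_le K); auto; lia).
  repeat split; auto using defined_Pexpr.
  - now apply (defined_enorm2_le K).
  - now apply (enorm2_neq0 K).
Qed.

Definition dbar_rule k := forall u, dom u -> forall j, (j < N)%nat ->
  eval (dzetabar (Pexpr k j)) u = eval (dbar_expr k j) u.
Definition orthogonal_to_prev k := forall u, dom u -> forall i, (i < k)%nat ->
  herm N (g i u) (g k u) = 0.
Definition invariants k := forall i, (i <= k)%nat -> dbar_rule i /\ orthogonal_to_prev i.

Lemma dbarg_eq k u j : dbar_rule k -> dom u -> (j < N)%nat ->
  dbarg k u j = match k with O => 0 | S k' => - (nrm2 k u / nrm2 k' u) * g k' u j end.
Proof.
  intros D Hu Hj; unfold dbarg; rewrite D by auto.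
  destruct k; [reflexivity | apply eval_dbar_expr_S].
Qed.

Lemma herm_g_prev k u i : orthogonal_to_prev k -> dom u -> (i < k)%nat ->
  herm N (g k u) (g i u) = 0.
Proof. intros O Hu Hi; rewrite <- herm_conj, (O u Hu i Hi); apply Cconj_0. Qed.

Lemma herm_dbarg_g k v u : dbar_rule k -> orthogonal_to_prev v -> dom u -> (k <= v)%nat ->
  herm N (dbarg k u) (g v u) = 0.
Proof.
  intros D O Hu Hkv.
  rewrite (herm_ext N (dbarg k u) _ (g v u) (g v u)
             (fun j => dbarg_eq k u j D Hu) (fun _ _ => eq_refl)).
  destruct k as [| k']; [apply herm_zerol |].
  rewrite herm_scall, (O u Hu k') by lia; ring.
Qed.

Lemma herm_g_dbarg k u : invariants k -> dom u -> herm N (g k u) (dbarg k u) = 0.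
Proof.
  intros Q Hu; destruct (Q k (le_n k)) as [D O].
  rewrite (herm_ext N (g k u) (g k u) (dbarg k u) _
             (fun _ _ => eq_refl) (fun j => dbarg_eq k u j D Hu)).
  destruct k as [| k']; [apply herm_zeror |].
  rewrite herm_scalr, (herm_g_prev (S k') u k') by auto; ring.
Qed.

Lemma dzeta_enorm2 k u : dbar_rule k -> orthogonal_to_prev k -> dom u ->
  eval (dzeta (enorm2 k)) u = mixd k u.
Proof.
  intros D O Hu; rewrite dzeta_eherm.
  change (herm N (dbarg k u) (g k u) + mixd k u = mixd k u).
  rewrite (herm_dbarg_g k k u D O Hu (le_n k)); ring.
Qed.

(* [dzetabar (dzeta g_k) = dzeta (dzetabar g_k)], and the latter is known by [dbar_rule k]. *)
Lemma dbardg_eq k u j : (S k <= K)%nat -> invariants k -> dom u -> (j < N)%nat ->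
  dbardg k u j = match k with O => 0 | S k' =>
    - (mixd k u / nrm2 k' u) * g k' u j + - (nrm2 k u / nrm2 k' u) * g k u j end.
Proof.
  intros Hk Q Hu Hj; unfold dbardg.
  assert (Hd : defined (Pexpr k j) u)
    by (apply defined_Pexpr; auto; apply (defined_enorm2_le K); auto; lia).
  rewrite <- dzeta_dzetabar by exact Hd.
  rewrite (dzeta_ext_defined (enorm2 K) (dzetabar (Pexpr k j)) (dbar_expr k j) u);
    auto using defined_dzetabar, defined_dbar_expr with arith.
  2: intros w Hw; now apply (proj1 (Q k (le_n k))).
  destruct k as [| k']; [reflexivity |].
  destruct (Q (S k') (le_n _)) as [D1 O1], (Q k' ltac:(lia)) as [D0 O0].
  cbn [dbar_expr dzeta eval].
  rewrite (dzeta_enorm2 (S k') u D1 O1 Hu), (dzeta_enorm2 k' u D0 O0 Hu), !eval_enorm2.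
  fold (dg k' u j) (g k' u j); rewrite dg_eq.
  assert (nrm2 k' u <> 0) by (apply nrm2_neq0; auto; lia).
  field; auto.
Qed.

Lemma herm_g_dbardg k u : (S k <= K)%nat -> invariants k -> dom u ->
  herm N (g k u) (dbardg k u) =
  match k with O => 0 | S k' => - (nrm2 k u / nrm2 k' u) * nrm2 k u end.
Proof.
  intros Hk Q Hu; destruct (Q k (le_n k)) as [D O].
  rewrite (herm_ext N (g k u) (g k u) (dbardg k u) _ (fun _ _ => eq_refl)
             (fun j => dbardg_eq k u j Hk Q Hu)).
  destruct k as [| k']; [apply herm_zeror |].
  rewrite herm_plusr, !herm_scalr, (herm_g_prev (S k') u k') by auto.
  fold (nrm2 (S k') u); ring.
Qed.

Lemma nrm2_S k u : nrm2 k u <> 0 ->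
  nrm2 (S k) u = herm N (dg k u) (dg k u) - mixd k u * Cconj (mixd k u) / nrm2 k u.
Proof.
  intros Hn; unfold nrm2 at 1.
  rewrite (herm_ext N _ _ _ _ (fun j _ => g_S k u j) (fun j _ => g_S k u j)).
  rewrite !herm_plusl, !herm_plusr, !herm_scall, !herm_scalr, <- (herm_conj N (g k u) (dg k u)).
  fold (mixd k u) (nrm2 k u).
  rewrite Copp_conj, Cdiv_conj, nrm2_conj by auto; field; auto.
Qed.

(* [dzetabar] of the defining formula of [g_(k+1)], expanded by the product rule. *)
Lemma dbarg_S k u j : nrm2 k u <> 0 -> dbarg (S k) u j =
  dbardg k u j + - (dbarg k u j * (mixd k u / nrm2 k u) + g k u j *
    ((herm N (dg k u) (dg k u) + herm N (g k u) (dbardg k u)) / nrm2 k u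
     - mixd k u * (Cconj (mixd k u) + herm N (g k u) (dbarg k u)) / (nrm2 k u * nrm2 k u))).
Proof.
  intros Hn; unfold dbarg at 1; cbn [Pexpr dzetabar eval].
  rewrite !dzetabar_eherm, !eval_eherm.
  fold (g k u) (dg k u) (dbarg k u) (dbardg k u) (nrm2 k u) (mixd k u).
  fold (dbardg k u j) (dbarg k u j) (g k u j).
  rewrite <- (herm_conj N (g k u) (dg k u)); fold (mixd k u).
  field; auto.
Qed.

Lemma dbar_rule_S k : (S k <= K)%nat -> invariants k -> dbar_rule (S k).
Proof.
  intros Hk Q u Hu j Hj; destruct (Q k (le_n k)) as [D O].
  assert (Hn : nrm2 k u <> 0) by (apply nrm2_neq0; auto).
  fold (dbarg (S k) u j); rewrite eval_dbar_expr_S, dbarg_S by auto.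
  rewrite (herm_g_dbarg k u Q Hu), (herm_g_dbardg k u Hk Q Hu), (dbardg_eq k u j Hk Q Hu Hj),
          (dbarg_eq k u j D Hu Hj).
  assert (Hdd : herm N (dg k u) (dg k u) = nrm2 (S k) u + mixd k u * Cconj (mixd k u) / nrm2 k u)
    by (rewrite nrm2_S by auto; field; auto).
  rewrite Hdd; destruct k as [| k'].
  - field; auto.
  - assert (nrm2 k' u <> 0) by (apply nrm2_neq0; auto; lia).
    field; auto.
Qed.

(* For [i < k], differentiating [<g_i, g_k> = 0] gives
   [<g_i, dzeta g_k> = - <dzetabar g_i, g_k> = 0]. *)
Lemma orthogonal_to_prev_S k : (S k <= K)%nat -> invariants k -> orthogonal_to_prev (S k).
Proof.
  intros Hk Q u Hu i Hi; destruct (Q k (le_n k)) as [D O].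
  assert (Hn : nrm2 k u <> 0) by (apply nrm2_neq0; auto).
  rewrite (herm_ext N (g i u) (g i u) _ _ (fun _ _ => eq_refl) (fun j _ => g_S k u j)).
  rewrite herm_plusr, herm_scalr.
  destruct (Nat.eq_dec i k) as [-> | Hik].
  - fold (mixd k u) (nrm2 k u); field; auto.
  - assert (Hi' : (i < k)%nat) by lia.
    destruct (Q i ltac:(lia)) as [Di _].
    assert (Hz : eval (dzeta (eherm N (Pexpr i) (Pexpr k))) u = eval (dzeta (EConst 0)) u).
    { apply (dzeta_ext_defined (enorm2 K)); simpl; auto.
      - intros w Hw; rewrite eval_eherm; exact (O w Hw i Hi').
      - apply defined_eherm; intros j Hj.
        split; apply defined_Pexpr; auto; apply (defined_enorm2_le K); auto; lia. }
    rewrite dzeta_eherm in Hz; fold (dbarg i u) (g k u) (g i u) (dg k u) in Hz.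
    rewrite (herm_dbarg_g i k u Di O Hu) in Hz by lia.
    simpl in Hz; rewrite Cplus_0_l in Hz; rewrite Hz, (O u Hu i Hi'); ring.
Qed.

Lemma invariants_le k : (k <= K)%nat -> invariants k.
Proof.
  induction k; intros Hk i Hi.
  - replace i with 0%nat by lia; split.
    + intros u Hu j Hj; apply f0_holomorphic.
    + intros u Hu i' Hi'; lia.
  - destruct (Nat.eq_dec i (S k)) as [-> | Hne].
    + split; [apply dbar_rule_S | apply orthogonal_to_prev_S]; auto; apply IHk; lia.
    + apply IHk; lia.
Qed.

Lemma herm_g_orthogonal a b u : (a <= K)%nat -> (b <= K)%nat -> a <> b -> dom u ->
  herm N (g a u) (g b u) = 0.
Proof.
  intros Ha Hb Hab Hu; destruct (Nat.lt_ge_cases a b) as [Hlt | Hge].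
  - exact (proj2 (invariants_le b Hb b (le_n b)) u Hu a Hlt).
  - apply (herm_g_prev a u b); auto; [exact (proj2 (invariants_le a Ha a (le_n a))) | lia].
Qed.

Hypothesis K_large : (N - 1 <= K)%nat.
Variable alpha : nat -> R.

Definition eproj (k i j : nat) : cexpr :=
  EMult (EMult (Pexpr k i) (econj (Pexpr k j))) (EInv (enorm2 k)).

Definition ebigP (i j : nat) : cexpr :=
  esum (N - 1) (fun k => EMult (EConst (RtoC (alpha k))) (eproj k i j)).

Definition ladder (k : nat) (u : C) (i j : nat) : C :=
  match k with O => 0 | S k' => g k u i * Cconj (g k' u j) / nrm2 k' u end.

Lemma dzeta_eproj k u i j : (S k <= K)%nat -> dom u -> (i < N)%nat -> (j < N)%nat ->
  eval (dzeta (eproj k i j)) u = ladder (S k) u i j - ladder k u i j.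
Proof.
  intros Hk Hu Hi Hj; destruct (invariants_le k ltac:(lia) k (le_n k)) as [D O].
  assert (Hn : nrm2 k u <> 0) by (apply nrm2_neq0; auto).
  unfold eproj; cbn [dzeta eval].
  rewrite dzeta_econj, (dzeta_enorm2 k u D O Hu), eval_enorm2, eval_econj.
  fold (dg k u i) (dbarg k u j) (g k u i) (g k u j).
  rewrite dg_eq, (dbarg_eq k u j D Hu Hj); unfold ladder.
  destruct k as [| k'].
  - rewrite Cconj_0; field; auto.
  - assert (nrm2 k' u <> 0) by (apply nrm2_neq0; auto; lia).
    rewrite Cmult_conj, Copp_conj, Cdiv_conj, !nrm2_conj by auto; field; auto.
Qed.

Lemma trmul_ladder a b u : (a <= K)%nat -> (b <= K)%nat -> dom u ->
  trmul N (ladder a u) (ladder b u) = 0.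
Proof.
  intros Ha Hb Hu; destruct a as [| a']; [apply trmul_zerol |].
  destruct b as [| b']; [apply trmul_zeror |].
  assert (na : nrm2 a' u <> 0) by (apply nrm2_neq0; auto).
  assert (nb : nrm2 b' u <> 0) by (apply nrm2_neq0; auto).
  transitivity (/ (nrm2 a' u * nrm2 b' u) *
                (herm N (g b' u) (g (S a') u) * herm N (g a' u) (g (S b') u))).
  { unfold trmul, herm; rewrite csum_mult, <- csum_scal; apply csum_ext; intros.
    rewrite <- csum_scal; apply csum_ext; intros; unfold ladder; field; auto. }
  destruct (Nat.eq_dec b' (S a')) as [E | E].
  - rewrite (herm_g_orthogonal a' (S b') u) by (auto; lia); ring.
  - rewrite (herm_g_orthogonal b' (S a') u) by (auto; lia); ring.
Qed.

Lemma defined_ebigP u i j : dom u -> (i < N)%nat -> (j < N)%nat -> defined (ebigP i j) u.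
Proof.
  intros Hu Hi Hj; apply defined_esum; intros k Hk; unfold eproj; cbn [defined].
  assert (Hd : defined (enorm2 k) u) by (apply (defined_enorm2_le K); auto; lia).
  rewrite defined_econj.
  repeat split; auto using defined_Pexpr.
  apply (enorm2_neq0 K); auto; lia.
Qed.

Lemma trace_dzeta_ebigP u : dom u ->
  trmul N (fun i j => eval (dzeta (ebigP i j)) u) (fun i j => eval (dzeta (ebigP i j)) u) = 0.
Proof.
  intros Hu.
  assert (E : forall i j, (i < N)%nat -> (j < N)%nat -> eval (dzeta (ebigP i j)) u =
            csum (N - 1) (fun k => RtoC (alpha k) * (ladder (S k) u i j - ladder k u i j))).
  { intros i j Hi Hj; unfold ebigP; rewrite dzeta_esum; apply csum_ext; intros k Hk.
    cbn [dzeta eval]; rewrite dzeta_eproj by (auto; lia); ring. }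
  rewrite (trmul_ext N _ _ _ _ E E).
  apply (trmul_telescope_zero N (N - 1) (fun k => RtoC (alpha k)) (fun k => ladder k u)).
  intros a b Ha Hb; apply trmul_ladder; auto; lia.
Qed.

Lemma ebigP_conj u i j : Cconj (eval (ebigP i j) u) = eval (ebigP j i) u.
Proof.
  unfold ebigP; rewrite !eval_esum, csum_conj; apply csum_ext; intros k Hk.
  unfold eproj; cbn [eval].
  rewrite !eval_econj, !Cmult_conj, Cconj_inv, !eval_enorm2, nrm2_conj, Cconj_RtoC, Cconj_conj.
  ring.
Qed.

Lemma dzetabar_ebigP u i j : dom u -> (i < N)%nat -> (j < N)%nat ->
  eval (dzetabar (ebigP i j)) u = Cconj (eval (dzeta (ebigP j i)) u).
Proof.
  intros Hu Hi Hj.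
  rewrite <- (Cconj_conj (eval (dzetabar (ebigP i j)) u)), <- dzeta_econj; f_equal.
  apply (dzeta_ext_defined (enorm2 K)); auto.
  - intros w Hw; rewrite eval_econj; apply ebigP_conj.
  - apply defined_econj, defined_ebigP; auto.
  - apply defined_ebigP; auto.
Qed.

Lemma trace_dzetabar_ebigP u : dom u ->
  trmul N (fun i j => eval (dzetabar (ebigP i j)) u)
          (fun i j => eval (dzetabar (ebigP i j)) u) = 0.
Proof.
  intros Hu.
  assert (E : forall i j, (i < N)%nat -> (j < N)%nat ->
            eval (dzetabar (ebigP i j)) u = Cconj (eval (dzeta (ebigP j i)) u))
    by (intros; apply dzetabar_ebigP; auto).
  rewrite (trmul_ext N _ _ _ _ E E), trmul_conj_transpose, trace_dzeta_ebigP by auto.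
  apply Cconj_0.
Qed.

End Iterates.

Fixpoint epow (m : nat) : cexpr :=
  match m with O => EConst 1 | S k => EMult EVar (epow k) end.

Lemma polynomial_cexpr N f : polynomial_components N f ->
  exists f0 : nat -> cexpr,
    (forall j u, defined (f0 j) u) /\ (forall j u, eval (dzetabar (f0 j)) u = 0) /\
    (forall w j, (j < N)%nat -> f w j = eval (f0 j) w).
Proof.
  intros [D [c Hc]].
  assert (Hpow : forall m u, defined (epow m) u /\ eval (dzetabar (epow m)) u = 0 /\
                             eval (epow m) u = cpow u m).
  { induction m; intros u; simpl; [repeat split |].
    destruct (IHm u) as (Hd & Hb & He); rewrite Hb, He; repeat split; auto; ring. }
  exists (fun j => esum (S D) (fun m => EMult (EConst (c j m)) (epow m))); split; [| split].
  - intros j u; apply defined_esum; intros m _; simpl; split; auto; apply Hpow.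
  - intros j u; rewrite dzetabar_esum; apply csum_eq0; intros m _; simpl.
    rewrite (proj1 (proj2 (Hpow m u))); ring.
  - intros w j Hj; rewrite Hc, eval_esum by auto; apply csum_ext; intros m _; simpl.
    now rewrite (proj2 (proj2 (Hpow m w))).
Qed.

Section Realization.

Variable N : nat.
Hypothesis N_pos : (0 < N)%nat.
Variable f : vfun.
Variable f0 : nat -> cexpr.
Hypothesis f0_defined : forall j u, defined (f0 j) u.
Hypothesis f_eval : forall w j, (j < N)%nat -> f w j = eval (f0 j) w.

Local Notation enorm2 k := (eherm N (Pexpr N f0 k) (Pexpr N f0 k)).

Lemma Pplus_iter_eval k w : defined (enorm2 k) w -> forall j, (j < N)%nat ->
  Pplus_iter N k f w j = eval (Pexpr N f0 k j) w.
Proof.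
  revert w; induction k; intros w Hd j Hj; [now apply f_eval |].
  destruct (defined_enorm2_S N N_pos f0 k w Hd) as [Hk _].
  assert (Hg : forall i, (i < N)%nat -> Pplus_iter N k f w i = eval (Pexpr N f0 k i) w)
    by auto.
  assert (Hdg : forall i, (i < N)%nat ->
            vwd (Pplus_iter N k f) w i = eval (dzeta (Pexpr N f0 k i)) w).
  { intros i Hi; apply wd_eval_near; [| now apply defined_Pexpr].
    apply (near_lines_impl _ _ w (fun w' Hw' => IHk w' Hw' i Hi)), near_lines_defined, Hk. }
  cbn [Pplus_iter Pexpr eval]; unfold Defs.Pplus.
  rewrite Hg, Hdg, (herm_ext N _ _ _ _ Hg Hdg), (herm_ext N _ _ _ _ Hg Hg), !eval_eherm by auto.
  unfold Cdiv; ring.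
Qed.

Lemma defined_enorm2_of_nonvanishing K z :
  (forall k, (k < K)%nat -> herm N (Pplus_iter N k f z) (Pplus_iter N k f z) <> 0) ->
  defined (enorm2 K) z.
Proof.
  intros Hnz; induction K as [| K IH].
  - apply defined_eherm; auto.
  - assert (Hd : defined (enorm2 K) z) by (apply IH; auto).
    apply defined_enorm2_succ; auto.
    rewrite eval_eherm,
      <- (herm_ext N _ _ _ _ (Pplus_iter_eval K z Hd) (Pplus_iter_eval K z Hd)).
    apply Hnz; lia.
Qed.

Lemma bigP_eval alpha w i j : defined (enorm2 (N - 1)) w -> (i < N)%nat -> (j < N)%nat ->
  bigP N alpha f w i j = eval (ebigP N f0 alpha i j) w.
Proof.
  intros Hd Hi Hj; unfold bigP, ebigP; rewrite eval_esum; apply csum_ext; intros k Hk.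
  assert (Hk' : defined (enorm2 k) w)
    by (apply (defined_enorm2_le N N_pos f0 (N - 1)); auto; lia).
  unfold proj, eproj; cbn [eval]; rewrite eval_econj, eval_eherm.
  rewrite (herm_ext N _ _ _ _ (Pplus_iter_eval k w Hk') (Pplus_iter_eval k w Hk')).
  now rewrite !Pplus_iter_eval.
Qed.

Lemma bigP_near_lines alpha z : defined (enorm2 (N - 1)) z ->
  near_lines (fun w => forall i j, (i < N)%nat -> (j < N)%nat ->
                         bigP N alpha f w i j = eval (ebigP N f0 alpha i j) w) z.
Proof.
  intros Hd.
  apply (near_lines_impl _ _ z (fun w Hw i j => bigP_eval alpha w i j Hw)), near_lines_defined, Hd.
Qed.

Lemma mwd_bigP alpha z i j : defined (enorm2 (N - 1)) z -> (i < N)%nat -> (j < N)%nat ->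
  mwd (bigP N alpha f) z i j = eval (dzeta (ebigP N f0 alpha i j)) z.
Proof.
  intros Hd Hi Hj; apply wd_eval_near.
  - apply (near_lines_impl _ _ z (fun w Hw => Hw i j Hi Hj)), bigP_near_lines, Hd.
  - now apply (defined_ebigP N N_pos f0 (N - 1)).
Qed.

Lemma mwdbar_bigP alpha z i j : defined (enorm2 (N - 1)) z -> (i < N)%nat -> (j < N)%nat ->
  mwdbar (bigP N alpha f) z i j = eval (dzetabar (ebigP N f0 alpha i j)) z.
Proof.
  intros Hd Hi Hj; apply wdbar_eval_near.
  - apply (near_lines_impl _ _ z (fun w Hw => Hw i j Hi Hj)), bigP_near_lines, Hd.
  - now apply (defined_ebigP N N_pos f0 (N - 1)).
Qed.

End Realization.

Theorem mainTheorem1 (N : nat) (f : vfun) (alpha : nat -> R) (z : C) :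
  (2 <= N)%nat ->
  polynomial_components N f ->
  lin_indep_components N f ->
  (forall k, (k <= N - 1)%nat -> herm N (Pplus_iter N k f z) (Pplus_iter N k f z) <> 0) ->
  trmul N (mwd (bigP N alpha f) z) (mwd (bigP N alpha f) z) = 0 /\
  trmul N (mwdbar (bigP N alpha f) z) (mwdbar (bigP N alpha f) z) = 0.
Proof.
  (* Linear independence only ensures that the [n_k] are not identically zero; their
     nonvanishing at [z] is assumed directly, and only for [k < N - 1] is it needed. *)
  intros HN Hpoly _ Hnz.
  assert (N_pos : (0 < N)%nat) by lia.
  destruct (polynomial_cexpr N f Hpoly) as (f0 & Hdef & Hhol & Hf).
  assert (Hd : defined (eherm N (Pexpr N f0 (N - 1)) (Pexpr N f0 (N - 1))) z)
    by (apply (defined_enorm2_of_nonvanishing N N_pos f f0 Hdef Hf); intros; apply Hnz; lia).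
  assert (Ed := fun i j => mwd_bigP N N_pos f f0 Hf alpha z i j Hd).
  assert (Edbar := fun i j => mwdbar_bigP N N_pos f f0 Hf alpha z i j Hd).
  split.
  - rewrite (trmul_ext N _ _ _ _ Ed Ed).
    exact (trace_dzeta_ebigP N N_pos f0 Hhol (N - 1) (le_n _) alpha z Hd).
  - rewrite (trmul_ext N _ _ _ _ Edbar Edbar).
    exact (trace_dzetabar_ebigP N N_pos f0 Hhol (N - 1) (le_n _) alpha z Hd).
Qed.
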